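(* For $k\in\mathbb{N}^*$ and $0\le r\le k-1$, in $P=\mathbb{Z}[x_1,\dots,x_k,y_1,\dots,y_k]$ we have \[\alpha(k-1,k)\beta(r+1,k)-\alpha(r,k)\beta(k,k)=(-1)^{r+1}y_ky_1\cdots y_r\,\alpha_{r+1}(k-r-2,k).\]
   Context: In $P$ indices are periodic: $x_{i+k}:=x_i$, $y_{i+k}:=y_i$. For $f\in P$ and $s\in\mathbb{N}$ the shift is $f_s:=f(x_{s+1},\dots,x_{s+k},y_{s+1},\dots,y_{s+k})$, and $\alpha_s(r,k):=(\alpha(r,k))_s$. Write $[r]=\{1,\dots,r\}$ ($\emptyset$ if $r\le0$) and $S+1=\{s+1:s\in S\}$. For $0\le r\le k$, $\alpha(r,k):=\sum_{S}\prod_{i\in S}y_i\prod_{j\in[r]\setminus(S\cup(S+1))}x_j$, summed over subsets $S\subseteq\{1,\dots,r-1\}$ with no two consecutive integers (so $\alpha(0,k)=1$); $\alpha(-1,k):=0$. Also $\beta(0,k)=\beta(1,k):=0$ and, for $2\le r\le k+1$, $\beta(r,k):=\sum_S y_k\prod_{i\in S}y_i\prod_{j\in\{2,\dots,r-1\}\setminus(S\cup(S+1))}x_j$, summed over subsets $S\subseteq\{2,\dots,r-2\}$ with no two consecutive integers. *)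

From HB Require Import structures.
From mathcomp Require Import all_boot all_order all_algebra.
From mathcomp Require Import mpoly.
Set Implicit Arguments. Unset Strict Implicit. Unset Printing Implicit Defensive.
Import GRing.Theory.
Local Open Scope ring_scope.

(* P = Z[x_1..x_k, y_1..y_k] is {mpoly int[k + k]}: variable number
   j (0 <= j < k) is x_{j+1}, variable number k + j is y_{j+1}. *)
Definition P (k : nat) := {mpoly int[k + k]}.

Definition Xn (n j : nat) : {mpoly int[n]} :=
  if insub j is Some o then 'X_o else 0.

(* periodic indices: x_i := x_{((i-1) mod k) + 1}, y_i likewise *)
Definition xv (k i : nat) : P k := Xn (k + k) ((i + k).-1 %% k).
Definition yv (k i : nat) : P k := Xn (k + k) (k + (i + k).-1 %% k).

(* the shift f_s := f(x_{s+1},...,x_{s+k},y_{s+1},...,y_{s+k}) *)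
Definition shift_tuple (k s : nat) : (k + k).-tuple (P k) :=
  [tuple (if (i < k)%N then xv k (s + i.+1) else yv k (s + (i - k).+1))
   | i < k + k].
Definition shift (k s : nat) (f : P k) : P k := f \mPo shift_tuple k s.

Definition memn (n : nat) (S : {set 'I_n}) (j : nat) : bool :=
  [exists i in S, val i == j].

Definition alpha (r k : nat) : P k :=
  \sum_(S : {set 'I_r.+1} |
          [forall i in S, (1 <= val i <= r.-1)%N] &&
          [forall i in S, ~~ memn S (val i).+1])
    ((\prod_(i in S) yv k (val i)) *
     \prod_(1 <= j < r.+1 | ~~ memn S j && ~~ memn S j.-1) xv k j).

(* alpha on integer arguments: alpha(-1,k) = 0 (other negative values are
   never used; they are also set to 0) *)
Definition alphaZ (r : int) (k : nat) : P k :=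
  match r with Posz n => alpha n k | Negz _ => 0 end.

Definition beta (r k : nat) : P k :=
  if (r < 2)%N then 0 else
  \sum_(S : {set 'I_r} |
          [forall i in S, (2 <= val i <= r - 2)%N] &&
          [forall i in S, ~~ memn S (val i).+1])
    (yv k k * (\prod_(i in S) yv k (val i)) *
     \prod_(2 <= j < r | ~~ memn S j && ~~ memn S j.-1) xv k j).

From HB Require Import structures.
From mathcomp Require Import all_boot all_order all_algebra.
From mathcomp Require Import mpoly.
From mathcomp Require Import ring zify.
From Stdlib Require Import FunctionalExtensionality.
Import GRing.Theory.
Local Open Scope ring_scope.
Set Implicit Arguments. Unset Strict Implicit. Unset Printing Implicit Defensive.

(* The polynomials alpha and beta are continuants.  For sequences X, Y in a
   commutative ring, cont s l is given by cont s 0 = 0, cont s 1 = 1 and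
   cont s (l+2) = X_(s+l+1) cont s (l+1) + Y_(s+l) cont s l.
   1. Expanding continuants from the left end, an induction on r proves the
      cross identity (cont_cross)
        cont 0 (n+1) cont 1 r - cont 0 (r+1) cont 1 n
          = (-1)^(r+1) Y_1 ... Y_r cont (r+1) (n-r).
   2. Sums over sets of integers without two consecutive elements (ncsum)
      satisfy the same recurrence, by splitting according to whether the top
      indices belong to the set (ncsum_cont).  Hence alpha(m,k) = cont 0 (m+1)
      and beta(r+1,k) = y_k cont 1 r in the variables x, y, and the shift by s
      turns alpha(m,k) into cont s (m+1).
   3. For k = n+1 the theorem is y_k times the cross identity. *)

Section Continuant.
Variable R : comNzRingType.
Variables X Y : nat -> R.

(* The continuant started at offset s: cont s 0 = 0, cont s 1 = 1 and the
   three-term recurrence below, so that cont s l.+1 is the continuant of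
   X_(s+1), ..., X_(s+l) with off-diagonal entries Y_(s+1), ..., Y_(s+l-1). *)
Fixpoint cont (s l : nat) : R :=
  match l with
  | 0 => 0
  | 1 => 1
  | (l'.+1 as m).+1 => X (s + l'.+1) * cont s m + Y (s + l') * cont s l'
  end.

Lemma cont_rec s l : cont s l.+2 = X (s + l.+1) * cont s l.+1 + Y (s + l) * cont s l.
Proof. by []. Qed.

Lemma cont_recl l s :
  cont s l.+2 = X s.+1 * cont s.+1 l.+1 + Y s.+1 * cont s.+2 l.
Proof.
elim/ltn_ind: l s => -[|[|l]] IH s.
- by rewrite cont_rec /= !addn0 addn1; ring.
- by rewrite !cont_rec /= !addn0 !addn1 addn2; ring.
rewrite cont_rec (IH l.+1 _ s) // (IH l _ s) // (cont_rec s.+1 l.+1) (cont_rec s.+2 l).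
rewrite !addSn !addnS; ring.
Qed.

(* The key identity: the "cross determinant" of the continuants started at
   0 and at 1 factors through the continuant started at r.+1.  Both sides
   satisfy the recurrence of cont in r, which gives the induction. *)
Lemma cont_cross n r : (r <= n)%N ->
  cont 0 n.+1 * cont 1 r - cont 0 r.+1 * cont 1 n =
  (-1) ^+ r.+1 * (\prod_(1 <= i < r.+1) Y i) * cont r.+1 (n - r).
Proof.
elim/ltn_ind: r => -[|[|r]] IH hrn.
- by rewrite big_geq // subn0 /=; ring.
- case: n IH hrn => // n _ _.
  rewrite big_nat1 (cont_recl n 0) subSS subn0 /= !addn0 add0n; ring.
have step : cont 0 n.+1 * cont 1 r.+2 - cont 0 r.+3 * cont 1 n =
    X r.+2 * (cont 0 n.+1 * cont 1 r.+1 - cont 0 r.+2 * cont 1 n) +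
    Y r.+1 * (cont 0 n.+1 * cont 1 r - cont 0 r.+1 * cont 1 n).
  by rewrite (cont_rec 1 r) (cont_rec 0 r.+1) add1n add0n; ring.
rewrite step (IH r.+1) ?(IH r) //; try lia.
have -> : (n - r = (n - r.+2).+2)%N by lia.
have -> : (n - r.+1 = (n - r.+2).+1)%N by lia.
have prodS m : \prod_(1 <= i < m.+2) Y i = \prod_(1 <= i < m.+1) Y i * Y m.+1.
  exact: big_nat_recr.
by rewrite cont_recl !prodS !exprS; ring.
Qed.

End Continuant.

Lemma cont_offset (R : comNzRingType) (X Y : nat -> R) s t l :
  cont (fun j => X (s + j)%N) (fun j => Y (s + j)%N) t l = cont X Y (s + t) l.
Proof.
elim/ltn_ind: l => -[|[|l]] IH //.
by rewrite !cont_rec (IH l.+1) // (IH l) // !addnA.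
Qed.

Lemma rmorph_cont (R S : comNzRingType) (f : {rmorphism R -> S})
    (X Y : nat -> R) (X' Y' : nat -> S) s l :
  (forall j, f (X j) = X' j) -> (forall j, f (Y j) = Y' j) ->
  f (cont X Y s l) = cont X' Y' s l.
Proof.
move=> fX fY; elim/ltn_ind: l => -[|[|l]] IH; first exact: rmorph0.
  exact: rmorph1.
by rewrite !cont_rec rmorphD !rmorphM fX fY (IH l.+1) // (IH l).
Qed.

Lemma memn_ge N (S : {set 'I_N}) j : (N <= j)%N -> memn S j = false.
Proof.
move=> hj; apply/negbTE/existsP => -[i /andP [_ /eqP ij]].
by move: (ltn_ord i); rewrite ij ltnNge hj.
Qed.

Lemma memn_val N (S : {set 'I_N}) (i : 'I_N) : memn S (val i) = (i \in S).
Proof.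
apply/existsP/idP => [[i' /andP [hi' /eqP /val_inj <-]] //|hi].
by exists i; rewrite hi eqxx.
Qed.

Lemma memn0 N j : memn (set0 : {set 'I_N}) j = false.
Proof. by apply/negbTE/existsP => -[i]; rewrite inE. Qed.

Lemma forall_memn N (S : {set 'I_N}) (P : nat -> bool) :
  [forall i in S, P (val i)] = all (fun j => memn S j ==> P j) (iota 0 N).
Proof.
apply/forallP/allP => [H j _|H i].
  by apply/implyP => /existsP [i /andP [hi /eqP <-]]; exact: (implyP (H i) hi).
apply/implyP => hi.
by have /implyP := H (val i); rewrite mem_iota ltn_ord memn_val hi; apply.
Qed.

Section SubsetSplit.
Variable n : nat.

(* A subset of 'I_n.+1 is a subset of 'I_n together with the information
   whether it contains the top element n. *)
Definition lift_set (S : {set 'I_n}) : {set 'I_n.+1} :=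
  [set widen_ord (leqnSn n) i | i in S].

Definition add_top (p : {set 'I_n} * bool) : {set 'I_n.+1} :=
  if p.2 then ord_max |: lift_set p.1 else lift_set p.1.

Definition drop_top (T : {set 'I_n.+1}) : {set 'I_n} * bool :=
  ([set i | widen_ord (leqnSn n) i \in T], ord_max \in T).

Lemma mem_lift_set S i : (widen_ord (leqnSn n) i \in lift_set S) = (i \in S).
Proof.
apply/imsetP/idP => [[j hj /(congr1 val) /= /val_inj ->] //|hi].
by exists i.
Qed.

Lemma ord_max_lift_set S : (ord_max \in lift_set S) = false.
Proof.
apply/imsetP => -[j _ /(congr1 val) /= jn].
by move: (ltn_ord j); rewrite -jn ltnn.
Qed.

Lemma add_topK : cancel add_top drop_top.
Proof.
move=> [S b]; rewrite /add_top /drop_top; congr pair; last first.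
  by case: b; rewrite /= ?setU11 ?ord_max_lift_set.
apply/setP => i; case: b; rewrite /= !inE ?mem_lift_set //.
suff -> : (widen_ord (leqnSn n) i == ord_max) = false by [].
by apply/negbTE/eqP => /(congr1 val) /= e; move: (ltn_ord i); rewrite e ltnn.
Qed.

Lemma drop_topK : cancel drop_top add_top.
Proof.
move=> T; rewrite /add_top /drop_top /=.
have low i : i != ord_max ->
    (i \in lift_set [set i | widen_ord (leqnSn n) i \in T]) = (i \in T).
  move=> ni; have hi : (val i < n)%N.
    rewrite ltn_neqAle -ltnS ltn_ord andbT.
    by apply: contra_neq ni => e; apply/val_inj.
  have -> : i = widen_ord (leqnSn n) (Ordinal hi) by apply/val_inj.
  by rewrite mem_lift_set inE.
case: ifP => hT; apply/setP => i; case: (eqVneq i ord_max) => [->|ni].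
- by rewrite setU11 hT.
- by rewrite !inE (negbTE ni) /= low.
- by rewrite ord_max_lift_set hT.
- by rewrite low.
Qed.

Lemma memn_lift_set S j : memn (lift_set S) j = memn S j.
Proof.
apply/existsP/existsP => -[i /andP [hi /eqP <-]].
  by case/imsetP: hi => i' hi' ->; exists i'; rewrite hi' eqxx.
by exists (widen_ord (leqnSn n) i); rewrite mem_lift_set hi eqxx.
Qed.

Lemma memn_add_top S j : memn (ord_max |: lift_set S) j = memn S j || (j == n).
Proof.
rewrite -memn_lift_set; apply/existsP/orP.
  move=> -[i /andP [+ /eqP <-]]; rewrite in_setU1 => /orP [/eqP ->|hi].
    by right.
  by left; apply/existsP; exists i; rewrite hi eqxx.
case=> [/existsP [i /andP [hi /eqP <-]]|/eqP ->].
  by exists i; rewrite in_setU1 hi orbT eqxx.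
by exists ord_max; rewrite setU11 eqxx.
Qed.

Lemma sum_subsetS (V : nmodType) (F : (nat -> bool) -> V) :
  \sum_(T : {set 'I_n.+1}) F (memn T) =
  \sum_(S : {set 'I_n}) (F (memn S) + F (fun j => memn S j || (j == n))).
Proof.
rewrite (reindex add_top); last first.
  by exists drop_top => T _; [exact: add_topK|exact: drop_topK].
rewrite -(pair_big xpredT xpredT (fun S b => F (memn (add_top (S, b))))) /=.
apply: eq_bigr => S _; rewrite big_bool /= addrC; congr (F _ + F _).
  by apply: functional_extensionality => j; rewrite memn_lift_set.
by apply: functional_extensionality => j; rewrite memn_add_top.
Qed.

End SubsetSplit.

Section NonConsecutiveSums.
Variable R : comNzRingType.
Variables X Y : nat -> R.

Definition ncsum (a m : nat) : R :=
  \sum_(S : {set 'I_m.+1} |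
          [forall i in S, (a <= val i <= m.-1)%N] &&
          [forall i in S, ~~ memn S (val i).+1])
    ((\prod_(i in S) Y (val i)) *
     \prod_(a <= j < m.+1 | ~~ memn S j && ~~ memn S j.-1) X j).

(* The same sum with the summation condition moved into the summand, written
   in terms of the characteristic predicate p of S. *)
Definition admissible (p : nat -> bool) (a m : nat) : bool :=
  all (fun j => p j ==> ((a <= j <= m.-1)%N && ~~ p j.+1)) (iota 0 m.+1).

Definition weight (p : nat -> bool) (a m : nat) : R :=
  (\prod_(0 <= j < m.+1 | p j) Y j) *
  \prod_(a <= j < m.+1 | ~~ p j && ~~ p j.-1) X j.

Definition term (a m : nat) (p : nat -> bool) : R :=
  if admissible p a m then weight p a m else 0.

Lemma prod_nat_recr_cond lo hi (P : pred nat) (F : nat -> R) : (lo <= hi)%N ->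
  \prod_(lo <= j < hi.+1 | P j) F j =
  (\prod_(lo <= j < hi | P j) F j) * (if P hi then F hi else 1).
Proof. by move=> h; rewrite big_mkcond big_nat_recr // -big_mkcond. Qed.

Lemma eq_prod_nat_cond lo hi (P Q : pred nat) (F : nat -> R) :
  (forall j, (lo <= j < hi)%N -> P j = Q j) ->
  \prod_(lo <= j < hi | P j) F j = \prod_(lo <= j < hi | Q j) F j.
Proof. by move=> PQ; apply: congr_big_nat. Qed.

Definition bounded (p : nat -> bool) (m : nat) : Prop :=
  forall j, (m < j)%N -> p j = false.

Lemma ncsumE a m : ncsum a m = \sum_(S : {set 'I_m.+1}) term a m (memn S).
Proof.
rewrite /ncsum big_mkcond; apply: eq_bigr => S _.
rewrite /term /admissible /weight (forall_memn S (fun j => a <= j <= m.-1)%N).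
rewrite (forall_memn S (fun j => ~~ memn S j.+1)) -all_predI.
rewrite (@eq_all _ _ (fun j => memn S j ==> ((a <= j <= m.-1)%N && ~~ memn S j.+1))).
  case: ifP => // _; congr (_ * _).
  by rewrite big_mkord; apply: eq_bigl => i; rewrite memn_val.
by move=> j /=; case: (memn S j).
Qed.

Lemma admissibleP p a m : bounded p m ->
  reflect (forall j, p j -> (a <= j <= m.-1)%N && ~~ p j.+1) (admissible p a m).
Proof.
move=> pm; apply: (iffP allP) => H j; last by move=> _; apply/implyP; exact: H.
move=> pj; apply: (implyP (H j _) pj).
by rewrite mem_iota add0n /= ltnS leqNgt; apply: contraL pj => /pm ->.
Qed.

(* An admissible set never contains the top index. *)
Lemma term_top (p : nat -> bool) a m : p m.+1 -> term a m.+1 p = 0.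
Proof.
move=> pm; rewrite /term; case: ifP => // /allP /(_ m.+1).
by rewrite mem_iota add0n ltnSn pm /= ltnn andbF => /(_ isT).
Qed.

Lemma admissible_grow p a m : bounded p m ->
  admissible p a m.+2 = admissible p a m.+1.
Proof.
move=> pm; have pm1 : bounded p m.+1 by move=> j hj; apply: pm; lia.
have pm2 : bounded p m.+2 by move=> j hj; apply: pm; lia.
apply/(admissibleP a pm2)/(admissibleP a pm1) => H j pj;
  have /andP [/andP [aj _] ->] := H j pj;
  have jm : (j <= m)%N by rewrite leqNgt; apply: contraL pj => /pm ->.
all: by rewrite aj /=; lia.
Qed.

Lemma term_grow p a m : bounded p m -> (a <= m.+2)%N ->
  term a m.+2 p = X m.+2 * term a m.+1 p.
Proof.
move=> pm am; rewrite /term admissible_grow //.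
case: ifP => _; last by rewrite mulr0.
rewrite /weight (prod_nat_recr_cond _ _ (leq0n m.+2)) (prod_nat_recr_cond _ _ am).
by rewrite /= !(pm m.+2) ?(pm m.+1) //=; ring.
Qed.

(* Adding the index m+1 to a set contained in [0, m]: admissibility for
   (a, m+2) reduces to admissibility for (a, m); a > 0 rules out S = {0}. *)
Lemma admissible_add p a m : bounded p m -> (0 < a <= m.+1)%N ->
  admissible (fun j => p j || (j == m.+1)) a m.+2 = admissible p a m.
Proof.
move=> pm /andP [a0 am]; set q := fun j => p j || (j == m.+1).
have qm : bounded q m.+2.
  by move=> j hj; rewrite /q pm /=; lia.
apply/(admissibleP a qm)/(admissibleP a pm) => H j.
- move=> pj; have jm : (j <= m)%N by rewrite leqNgt; apply: contraL pj => /pm ->.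
  have /andP [/andP [aj _]] := H j (introT orP (or_introl pj)).
  by rewrite negb_or => /andP [-> jm1]; rewrite aj /=; move: jm1; rewrite eqSS; lia.
- rewrite /q => /orP [pj|/eqP ->].
    have /andP [/andP [aj jm] pj1] := H j pj.
    by rewrite negb_or pj1 aj eqSS /=; apply/andP; split; [lia|apply/eqP; lia].
  by rewrite am (pm m.+2) //= eqSS; apply/eqP; lia.
Qed.

(* Adding the index m+1 contributes Y_(m+1) and removes X_(m+1), X_(m+2). *)
Lemma term_add p a m : bounded p m -> (0 < a <= m.+1)%N ->
  term a m.+2 (fun j => p j || (j == m.+1)) = Y m.+1 * term a m p.
Proof.
move=> pm /andP [a0 am]; rewrite /term admissible_add ?a0 //.
case: ifP => _; last by rewrite mulr0.
have low j : (j < m.+1)%N -> p j || (j == m.+1) = p j.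
  by move=> hj; rewrite orbC; case: eqP => [e|_] //; lia.
rewrite /weight (prod_nat_recr_cond _ _ (leq0n m.+2)).
rewrite (prod_nat_recr_cond _ _ (leq0n m.+1)) (prod_nat_recr_cond _ _ (leqW am)).
rewrite (prod_nat_recr_cond _ _ am) (pm m.+2) // eqxx orbT /= (gtn_eqF (ltnSn m.+1)).
rewrite (@eq_prod_nat_cond _ _ _ p Y) => [|j /andP [_ /low] //].
rewrite (@eq_prod_nat_cond _ _ _ (fun j => ~~ p j && ~~ p j.-1) X) => [|j /andP [_ jm]].
  by rewrite /=; ring.
by rewrite /= !low //; lia.
Qed.

Lemma ncsum_rec a m : (0 < a <= m.+1)%N ->
  ncsum a m.+2 = X m.+2 * ncsum a m.+1 + Y m.+1 * ncsum a m.
Proof.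
move=> /andP [a0 am]; rewrite !ncsumE sum_subsetS.
rewrite (eq_bigr (fun S => term a m.+2 (memn S))); last first.
  by move=> S _; rewrite [X in _ + X]term_top ?eqxx ?orbT // addr0.
rewrite sum_subsetS [X in _ = _ * X + _]sum_subsetS.
rewrite !mulr_sumr -big_split; apply: eq_bigr => S _.
have Sm : bounded (memn S) m by move=> j; apply: memn_ge.
rewrite [X in _ = _ * (_ + X) + _]term_top ?eqxx ?orbT // addr0.
by rewrite term_grow ?term_add ?a0 //; lia.
Qed.

Lemma ncsum_short a m : (m.-1 < a)%N -> ncsum a m = \prod_(a <= j < m.+1) X j.
Proof.
move=> ma; rewrite /ncsum (big_pred1 set0); last first.
  move=> S /=; apply/idP/eqP => [/andP [/forallP S_in _]|->].
    apply/setP => i; rewrite inE; apply/negbTE/negP => iS.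
    by have /andP [ai im] := implyP (S_in i) iS; lia.
  by apply/andP; split; apply/forallP => i; rewrite inE.
by rewrite big_set0 mul1r; apply: eq_bigl => j; rewrite !memn0.
Qed.

Lemma ncsum_cont t d : ncsum t.+1 (t + d) = cont X Y t d.+1.
Proof.
elim/ltn_ind: d => -[|[|d]] IH.
- by rewrite addn0 ncsum_short ?big_geq //; lia.
- rewrite ncsum_short; last by lia.
  by rewrite addn1 big_nat1 cont_rec /= addn0 addn1 mulr1 mulr0 addr0.
rewrite !addnS ncsum_rec; last by lia.
by rewrite -!addnS (IH d.+1) // (IH d).
Qed.

End NonConsecutiveSums.

Lemma alpha_cont m k : alpha m k = cont (xv k) (yv k) 0 m.+1.
Proof. exact: (ncsum_cont (xv k) (yv k) 0 m). Qed.

Lemma beta_cont r k : beta r.+1 k = yv k k * cont (xv k) (yv k) 1 r.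
Proof.
case: r => [|r]; first by rewrite /beta /= mulr0.
rewrite -(ncsum_cont (xv k) (yv k) 1 r) /beta /= /ncsum mulr_sumr add1n.
by apply: eq_big => [S|S _]; rewrite ?mulrA // !subSS subn0.
Qed.

Lemma shift_xv k s j : (0 < k)%N -> shift s (xv k j) = xv k (s + j).
Proof.
move=> k0; rewrite /shift /xv.
have jk : ((j + k).-1 %% k < k + k)%N.
  by rewrite (leq_trans (ltn_pmod _ k0)) ?leq_addr.
rewrite /Xn insubT comp_mpolyXU -tnth_nth tnth_mktuple /= ltn_pmod //.
congr Xn; rewrite addnS addSn /= modnDr modnDmr; congr modn; lia.
Qed.

Lemma shift_yv k s j : (0 < k)%N -> shift s (yv k j) = yv k (s + j).
Proof.
move=> k0; rewrite /shift /yv.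
have jk : (k + (j + k).-1 %% k < k + k)%N by rewrite ltn_add2l ltn_pmod.
rewrite /Xn insubT comp_mpolyXU -tnth_nth tnth_mktuple /= ltnNge leq_addr /= addKn.
congr (Xn _ (_ + _)); rewrite addnS addSn /= modnDr modnDmr; congr modn; lia.
Qed.

Lemma shift_alpha k s m : (0 < k)%N ->
  shift s (alpha m k) = cont (xv k) (yv k) s m.+1.
Proof.
move=> k0; have := cont_offset (xv k) (yv k) s 0 m.+1; rewrite addn0 => <-.
rewrite alpha_cont /shift; apply: rmorph_cont => j.
  exact: shift_xv.
exact: shift_yv.
Qed.

(* The shifted alpha(k - r - 2) of the statement, with alpha(-1) = 0 matching
   the zero continuant cont _ 0. *)
Lemma shift_alphaZ n r : (r <= n)%N ->
  shift r.+1 (alphaZ (n.+1%:Z - r%:Z - 2) n.+1) =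
  cont (xv n.+1) (yv n.+1) r.+1 (n - r).
Proof.
move=> rn; case: (ltnP r n) => [r_lt_n|n_le_r].
  have -> : (n.+1%:Z - r%:Z - 2 = (n - r.+1)%N%:Z)%R by lia.
  by rewrite /alphaZ shift_alpha // -subSn.
have -> : r = n by apply/eqP; rewrite eqn_leq rn.
have -> : (n.+1%:Z - n%:Z - 2 = Negz 0)%R by rewrite NegzE; lia.
by rewrite /alphaZ /shift comp_mpoly0 subnn.
Qed.

Theorem lemma4p2 (k r : nat) (hk : (0 < k)%N) (hr : (r <= k - 1)%N) :
  alpha (k - 1) k * beta r.+1 k - alpha r k * beta k k =
  (-1) ^+ r.+1 * yv k k * (\prod_(1 <= i < r.+1) yv k i) *
    shift (r.+1) (alphaZ (k%:Z - r%:Z - 2) k).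
Proof.
case: k hk hr => // n _; rewrite subSS subn0 => rn.
set x := xv n.+1; set y := yv n.+1.
rewrite !alpha_cont !beta_cont shift_alphaZ //.
have -> : cont x y 0 n.+1 * (y n.+1 * cont x y 1 r) -
          cont x y 0 r.+1 * (y n.+1 * cont x y 1 n) =
          y n.+1 * (cont x y 0 n.+1 * cont x y 1 r - cont x y 0 r.+1 * cont x y 1 n).
  by ring.
by rewrite cont_cross //; ring.
Qed.
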